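(* Let $(\gamma_n)$ be a sequence of positive reals satisfying conditions (C1)–(C7) below, let $f,g\in\mathcal{L}$, and let \[ \sigma_n^{fg}(t)=\frac{\sum_{k=0}^n K^k[f(t)]\,K^k[\overline{g(t)}]}{\sum_{k=0}^n\frac{1}{\gamma_k}}. \] If for some $t_0\in\mathbb{R}$ the sequence $\sigma_n^{fg}(t_0)$ converges as $n\to\infty$, then $\sigma_n^{fg}(t)$ converges for all $t\in\mathbb{R}$ to a constant function.
   Context: Given positive reals $\gamma_n$, set $\gamma_{-1}=1$, $p_{-1}=0$, $p_0=1$ and $\gamma_n p_{n+1}(\omega)=\omega p_n(\omega)-\gamma_{n-1}p_{n-1}(\omega)$ ($n\ge0$). Let $\Delta_n=\gamma_{n+1}-\gamma_n$, $\Delta^2_n=\Delta_{n+1}-\Delta_n$. Conditions: (C1) $\gamma_n\to\infty$; (C2) $\Delta_n\to0$; (C3) there exist $n_0,m_0$ with $\gamma_{n+m}>\gamma_n$ for all $n\ge n_0$, $m\ge m_0$; (C4) $\sum 1/\gamma_j=\infty$; (C5) some $\kappa>1$ has $\sum\gamma_j^{-\kappa}<\infty$; (C6) $\sum|\Delta_n|/\gamma_n^2<\infty$; (C7) $\sum|\Delta^2_n|/\gamma_n<\infty$. $C^\infty_{\mathbb{R}\to\mathbb{C}}$ is the set of functions $\mathbb{R}\to\mathbb{C}$ with infinitely differentiable real and imaginary parts. $K^n=(-i)^n p_n\!\left(i\frac{d}{dt}\right)$. $\mathcal{L}$ is the set of $f\in C^\infty_{\mathbb{R}\to\mathbb{C}}$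 for which $\gamma_n(|K^n[f(t)]|^2+|K^{n+1}[f(t)]|^2)$ converges uniformly on every compact interval. *)

From Stdlib Require Import Reals.
From Coquelicot Require Import Coquelicot.
Open Scope R_scope.

(* gamma_{n-1} with the convention gamma_{-1} = 1 *)
Definition gamma_prev (gamma : nat -> R) (n : nat) : R :=
  match n with O => 1 | S m => gamma m end.

(* coefficients of omega * p(omega) given coefficients of p *)
Definition shift_coef (c : nat -> R) (j : nat) : R :=
  match j with O => 0 | S j' => c j' end.

(* pp gamma n = (coefficients of p_{n-1}, coefficients of p_n),
   p_{-1} = 0, p_0 = 1,
   gamma_n p_{n+1} = omega p_n - gamma_{n-1} p_{n-1}. *)
Fixpoint pp (gamma : nat -> R) (n : nat) : (nat -> R) * (nat -> R) :=
  match n with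
  | O => (fun _ => 0, fun j => match j with O => 1 | S _ => 0 end)
  | S n' => let (a, b) := pp gamma n' in
            (b, fun j => (shift_coef b j - gamma_prev gamma n' * a j) / gamma n')
  end.

(* p_coef gamma n j = coefficient of omega^j in p_n (deg p_n = n) *)
Definition p_coef (gamma : nat -> R) (n j : nat) : R := snd (pp gamma n) j.

Fixpoint cpow (z : C) (n : nat) : C :=
  match n with O => RtoC 1 | S m => Cmult z (cpow z m) end.

Fixpoint csum (a : nat -> C) (n : nat) : C :=
  match n with O => a O | S m => Cplus (csum a m) (a (S m)) end.

Definition cderiv_n (j : nat) (f : R -> C) (t : R) : C :=
  (Derive_n (fun s => Re (f s)) j t, Derive_n (fun s => Im (f s)) j t).

Definition smoothRC (f : R -> C) : Prop :=
  forall (k : nat) (t : R),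
    ex_derive_n (fun s => Re (f s)) k t /\ ex_derive_n (fun s => Im (f s)) k t.

(* K^n[f](t) = (-i)^n p_n(i d/dt) f (t) *)
Definition Kop (gamma : nat -> R) (n : nat) (f : R -> C) (t : R) : C :=
  Cmult (cpow (Copp Ci) n)
        (csum (fun j => Cmult (RtoC (p_coef gamma n j))
                              (Cmult (cpow Ci j) (cderiv_n j f t))) n).

Definition unif_conv_compact (u : nat -> R -> R) : Prop :=
  forall a b : R, a <= b ->
    exists L : R -> R, forall eps : R, 0 < eps ->
      exists N : nat, forall n : nat, (N <= n)%nat ->
        forall t : R, a <= t <= b -> Rabs (u n t - L t) < eps.

Definition in_L (gamma : nat -> R) (f : R -> C) : Prop :=
  smoothRC f /\
  unif_conv_compact (fun n t =>
     gamma n * ((Cmod (Kop gamma n f t)) ^ 2 + (Cmod (Kop gamma (S n) f t)) ^ 2)).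

Definition Delta (gamma : nat -> R) (n : nat) : R := gamma (S n) - gamma n.
Definition Delta2 (gamma : nat -> R) (n : nat) : R :=
  Delta gamma (S n) - Delta gamma n.

Definition CondC1 (gamma : nat -> R) : Prop := is_lim_seq gamma p_infty.
Definition CondC2 (gamma : nat -> R) : Prop := is_lim_seq (Delta gamma) 0.
Definition CondC3 (gamma : nat -> R) : Prop :=
  exists n0 m0 : nat, forall n m : nat, (n0 <= n)%nat -> (m0 <= m)%nat ->
    gamma (n + m)%nat > gamma n.
Definition CondC4 (gamma : nat -> R) : Prop :=
  is_lim_seq (fun n => sum_f_R0 (fun j => / gamma j) n) p_infty.
Definition CondC5 (gamma : nat -> R) : Prop :=
  exists kappa : R, kappa > 1 /\ ex_series (fun j => Rpower (gamma j) (- kappa)).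
Definition CondC6 (gamma : nat -> R) : Prop :=
  ex_series (fun n => Rabs (Delta gamma n) / (gamma n) ^ 2).
Definition CondC7 (gamma : nat -> R) : Prop :=
  ex_series (fun n => Rabs (Delta2 gamma n) / gamma n).

Definition sigma_fg (gamma : nat -> R) (f g : R -> C) (n : nat) (t : R) : C :=
  Cdiv (csum (fun k => Cmult (Kop gamma k f t)
                             (Kop gamma k (fun s => Cconj (g s)) t)) n)
       (RtoC (sum_f_R0 (fun k => / gamma k) n)).

From Stdlib Require Import Reals Lra Lia.
From Coquelicot Require Import Coquelicot.
Open Scope R_scope.

(* The operators K^n satisfy the derivative recurrence
   (K^n f)' = gamma_n K^(n+1) f - gamma_(n-1) K^(n-1) f, so the derivative of the
   numerator S_n(t) = sum_(k<=n) K^k[f] K^k[conj g] of sigma_n telescopes to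
   gamma_n (K^(n+1)[f] K^n[conj g] + K^n[f] K^(n+1)[conj g]).  By AM-GM this is at most
   the mean of the n-th terms of the series defining L for f and for conj g, and the latter
   equals that for g because K^n[conj g] = conj K^n[g].  These terms are eventually
   bounded on [t0, t] since f, g are in L, so S_n(t) - S_n(t0) stays bounded, while the
   denominator sum_(k<=n) 1/gamma_k diverges by (C4).  Thus sigma_n(t) - sigma_n(t0) -> 0;
   besides (C4) only the positivity of the gamma_n is used. *)

Definition is_cderive (F F' : R -> C) : Prop := forall t,
  is_derive (fun s => Re (F s)) t (Re (F' t)) /\
  is_derive (fun s => Im (F s)) t (Im (F' t)).

Lemma is_cderive_ext (F G F' G' : R -> C) :
  (forall t, F t = G t) -> (forall t, F' t = G' t) ->
  is_cderive F F' -> is_cderive G G'.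
Proof.
intros eFG eF'G' HF t; destruct (HF t) as [HRe HIm]; rewrite <- eF'G'; split.
- apply (is_derive_ext (fun s => Re (F s))); [now intros; rewrite eFG | exact HRe].
- apply (is_derive_ext (fun s => Im (F s))); [now intros; rewrite eFG | exact HIm].
Qed.

Lemma is_cderive_unique (F F' G' : R -> C) :
  is_cderive F F' -> is_cderive F G' -> forall t, F' t = G' t.
Proof.
intros HF HG t; destruct (HF t) as [HRe HIm]; destruct (HG t) as [GRe GIm].
apply injective_projections.
- change (Re (F' t) = Re (G' t)).
  now rewrite <- (is_derive_unique _ _ _ HRe), <- (is_derive_unique _ _ _ GRe).
- change (Im (F' t) = Im (G' t)).
  now rewrite <- (is_derive_unique _ _ _ HIm), <- (is_derive_unique _ _ _ GIm).
Qed.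

Lemma is_cderive_plus (F F' G G' : R -> C) :
  is_cderive F F' -> is_cderive G G' ->
  is_cderive (fun t => F t + G t)%C (fun t => F' t + G' t)%C.
Proof.
intros HF HG t; destruct (HF t) as [FRe FIm]; destruct (HG t) as [GRe GIm].
split; [apply (is_derive_plus (fun s => Re (F s)) (fun s => Re (G s)))
      | apply (is_derive_plus (fun s => Im (F s)) (fun s => Im (G s)))]; assumption.
Qed.

Lemma is_cderive_mult (F F' G G' : R -> C) :
  is_cderive F F' -> is_cderive G G' ->
  is_cderive (fun t => F t * G t)%C (fun t => F' t * G t + F t * G' t)%C.
Proof.
intros HF HG t; destruct (HF t) as [FRe FIm]; destruct (HG t) as [GRe GIm].
assert (mult : forall u v u' v', is_derive u t u' -> is_derive v t v' ->
          is_derive (fun s => u s * v s) t (u' * v t + u t * v')).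
{ intros u v u' v' Hu Hv. apply (is_derive_mult u v); auto. intros; apply Rmult_comm. }
split.
- apply (is_derive_ext (fun s => Re (F s) * Re (G s) - Im (F s) * Im (G s)));
    [reflexivity|].
  replace (Re (F' t * G t + F t * G' t)%C)
    with ((Re (F' t) * Re (G t) + Re (F t) * Re (G' t))
          - (Im (F' t) * Im (G t) + Im (F t) * Im (G' t))) by (unfold Re, Im; simpl; ring).
  apply (is_derive_minus (fun s => Re (F s) * Re (G s)) (fun s => Im (F s) * Im (G s)));
    now apply mult.
- apply (is_derive_ext (fun s => Re (F s) * Im (G s) + Im (F s) * Re (G s)));
    [reflexivity|].
  replace (Im (F' t * G t + F t * G' t)%C)
    with ((Re (F' t) * Im (G t) + Re (F t) * Im (G' t))
          + (Im (F' t) * Re (G t) + Im (F t) * Re (G' t))) by (unfold Re, Im; simpl; ring).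
  apply (is_derive_plus (fun s => Re (F s) * Im (G s)) (fun s => Im (F s) * Re (G s)));
    now apply mult.
Qed.

Lemma is_cderive_const (c : C) : is_cderive (fun _ => c) (fun _ => RtoC 0).
Proof. intro t; split; exact (is_derive_const _ t). Qed.

Lemma is_cderive_scal (c : C) (F F' : R -> C) :
  is_cderive F F' -> is_cderive (fun t => c * F t)%C (fun t => c * F' t)%C.
Proof.
intro HF; refine (is_cderive_ext _ _ _ _ (fun _ => eq_refl) _
                    (is_cderive_mult _ _ _ _ (is_cderive_const c) HF)).
intro; apply injective_projections; simpl; ring.
Qed.

Lemma is_cderive_conj (F F' : R -> C) :
  is_cderive F F' -> is_cderive (fun t => Cconj (F t)) (fun t => Cconj (F' t)).
Proof.
intros HF t; destruct (HF t) as [HRe HIm]; split; [exact HRe|].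
now apply (is_derive_opp (fun s => Im (F s))).
Qed.

Lemma csum_ext (a b : nat -> C) (n : nat) :
  (forall j, (j <= n)%nat -> a j = b j) -> csum a n = csum b n.
Proof.
induction n as [|n IH]; intros Hab; simpl; [apply Hab; lia|].
rewrite IH, Hab; [reflexivity | lia | intros; apply Hab; lia].
Qed.

Lemma csum_scal (z : C) (a : nat -> C) (n : nat) :
  csum (fun j => z * a j)%C n = (z * csum a n)%C.
Proof. induction n as [|n IH]; simpl; [reflexivity|rewrite IH; ring]. Qed.

Lemma csum_Sl (a : nat -> C) (n : nat) :
  csum a (S n) = (a O + csum (fun j => a (S j)) n)%C.
Proof.
induction n as [|n IH]; [reflexivity|].
change (csum a (S (S n))) with (csum a (S n) + a (S (S n)))%C.
rewrite IH; simpl; ring.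
Qed.

Lemma csum_zero_tail (a : nat -> C) (m m' : nat) :
  (forall j, (m < j)%nat -> a j = 0%C) -> (m <= m')%nat -> csum a m' = csum a m.
Proof.
intros Ha Hm; induction Hm as [|m' Hm IH]; [reflexivity|].
simpl; rewrite IH, Ha by lia; ring.
Qed.

Lemma is_cderive_csum (a a' : nat -> R -> C) (n : nat) :
  (forall j, is_cderive (a j) (a' j)) ->
  is_cderive (fun t => csum (fun j => a j t) n) (fun t => csum (fun j => a' j t) n).
Proof.
intro Ha; induction n as [|n IH]; [apply Ha|].
exact (is_cderive_plus _ _ _ _ IH (Ha (S n))).
Qed.

Lemma is_cderive_cderiv_n (f : R -> C) (j : nat) :
  smoothRC f -> is_cderive (cderiv_n j f) (cderiv_n (S j) f).
Proof. intros Hf t; split; apply Derive_correct, (Hf (S j) t). Qed.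

Lemma smoothRC_conj (g : R -> C) : smoothRC g -> smoothRC (fun s => Cconj (g s)).
Proof.
intros Hg k t; destruct (Hg k t) as [HRe HIm]; split; [exact HRe|].
destruct k as [|k]; [exact I|].
apply (ex_derive_ext (fun s => - Derive_n (fun s => Im (g s)) k s)).
- intro s; symmetry; apply (Derive_n_opp (fun s => Im (g s))).
- now apply (ex_derive_opp (fun s => Derive_n (fun s => Im (g s)) k s)).
Qed.

Lemma Ci_sqr : (Ci * Ci = - 1)%C.
Proof. apply injective_projections; simpl; ring. Qed.

(* [dpoly c m f] is [c(i d/dt) f] for a polynomial [c] of degree at most [m]. *)
Definition dpoly (c : nat -> R) (m : nat) (f : R -> C) (t : R) : C :=
  csum (fun j => RtoC (c j) * (cpow Ci j * cderiv_n j f t))%C m.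

Lemma Kop_dpoly (gamma : nat -> R) (n : nat) (f : R -> C) (t : R) :
  Kop gamma n f t = (cpow (- Ci) n * dpoly (p_coef gamma n) n f t)%C.
Proof. reflexivity. Qed.

Lemma dpoly_zero_tail (c : nat -> R) (m m' : nat) (f : R -> C) (t : R) :
  (forall j, (m < j)%nat -> c j = 0) -> (m <= m')%nat -> dpoly c m' f t = dpoly c m f t.
Proof.
intros Hc; apply csum_zero_tail; intros j Hj; rewrite Hc by exact Hj.
apply injective_projections; simpl; ring.
Qed.

Lemma dpoly_ext (c d : nat -> R) (m : nat) (f : R -> C) (t : R) :
  (forall j, c j = d j) -> dpoly c m f t = dpoly d m f t.
Proof. intro Hcd; apply csum_ext; intros j _; now rewrite Hcd. Qed.

Lemma dpoly_scal (a : R) (c : nat -> R) (m : nat) (f : R -> C) (t : R) :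
  dpoly (fun j => a * c j) m f t = (a * dpoly c m f t)%C.
Proof.
unfold dpoly; rewrite <- csum_scal; apply csum_ext; intros; rewrite RtoC_mult; ring.
Qed.

Lemma dpoly_minus (c d : nat -> R) (m : nat) (f : R -> C) (t : R) :
  dpoly (fun j => c j - d j) m f t = (dpoly c m f t - dpoly d m f t)%C.
Proof.
unfold dpoly; induction m as [|m IH]; simpl; [|rewrite IH]; rewrite RtoC_minus; ring.
Qed.

(* [shift_coef c] is [omega c(omega)] and [omega] acts as [i d/dt], whence the factor [-i]. *)
Lemma is_cderive_dpoly (c : nat -> R) (m : nat) (f : R -> C) :
  smoothRC f ->
  is_cderive (dpoly c m f) (fun t => - Ci * dpoly (shift_coef c) (S m) f t)%C.
Proof.
intro Hf.
refine (is_cderive_ext _ _ _ _ (fun _ => eq_refl) _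
          (is_cderive_csum (fun j t => RtoC (c j) * (cpow Ci j * cderiv_n j f t))%C _ m
             (fun j => is_cderive_scal _ _ _ (is_cderive_scal _ _ _
                         (is_cderive_cderiv_n f j Hf))))).
intro t; unfold dpoly; rewrite csum_Sl; simpl shift_coef.
replace (RtoC 0 * (cpow Ci 0 * cderiv_n 0 f t))%C with (RtoC 0)
  by (apply injective_projections; simpl; ring).
rewrite Cplus_0_l, <- csum_scal; apply csum_ext; intros j _; simpl.
transitivity (- (Ci * Ci) * (RtoC (c j) * (cpow Ci j * cderiv_n (S j) f t)))%C;
  [rewrite Ci_sqr|]; ring.
Qed.

Lemma pp_S (gamma : nat -> R) (n : nat) :
  pp gamma (S n) = (p_coef gamma n, fun j =>
    (shift_coef (p_coef gamma n) j - gamma_prev gamma n * fst (pp gamma n) j) / gamma n).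
Proof. unfold p_coef; simpl; destruct (pp gamma n); reflexivity. Qed.

Lemma pp_degree (gamma : nat -> R) (n : nat) :
  (forall j, (n < j)%nat -> p_coef gamma n j = 0) /\
  (forall j, (n <= j)%nat -> fst (pp gamma n) j = 0).
Proof.
induction n as [|n [Hsnd Hfst]].
- split; intros [|j] Hj; simpl; reflexivity || lia.
- unfold p_coef at 1; rewrite pp_S; split; intros j Hj; simpl; [|apply Hsnd; lia].
  destruct j as [|j]; [lia|]; simpl.
  rewrite Hsnd, Hfst by lia; unfold Rdiv; ring.
Qed.

Lemma Kop0 (gamma : nat -> R) (f : R -> C) (t : R) : Kop gamma 0 f t = f t.
Proof. unfold Kop, p_coef; simpl; apply injective_projections; simpl; unfold Re, Im; ring. Qed.

Definition prev_term (X : nat -> R -> C) (n : nat) (t : R) : C :=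
  match n with O => RtoC 0 | S m => X m t end.

Section ThreeTermDerivative.

Variable gamma : nat -> R.
Hypothesis gamma_pos : forall n, 0 < gamma n.

Definition three_term_deriv (X : nat -> R -> C) : Prop :=
  forall n, is_cderive (X n)
    (fun t => gamma n * X (S n) t - gamma_prev gamma n * prev_term X n t)%C.

Lemma gamma_Kop_S (n : nat) (f : R -> C) (t : R) :
  (gamma n * Kop gamma (S n) f t)%C =
  (cpow (- Ci) (S n) * (dpoly (shift_coef (p_coef gamma n)) (S n) f t
                        - gamma_prev gamma n * dpoly (fst (pp gamma n)) (S n) f t))%C.
Proof.
rewrite Kop_dpoly, <- dpoly_scal, <- dpoly_minus.
transitivity (cpow (- Ci) (S n) * dpoly (fun j => (gamma n * p_coef gamma (S n) j)%R) (S n) f t)%C;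
  [rewrite dpoly_scal; ring|].
f_equal; apply dpoly_ext; intro j.
unfold p_coef at 1; rewrite pp_S; simpl.
field; apply Rgt_not_eq, gamma_pos.
Qed.

Lemma Kop_prev_term (n : nat) (f : R -> C) (t : R) :
  prev_term (fun k => Kop gamma k f) n t =
  (- (cpow (- Ci) (S n) * dpoly (fst (pp gamma n)) (S n) f t))%C.
Proof.
destruct n as [|m].
- apply injective_projections; simpl; ring.
- rewrite pp_S, (dpoly_zero_tail _ m) by (apply (pp_degree gamma m) || lia); simpl.
  rewrite Kop_dpoly.
  transitivity (- (Ci * Ci) * (cpow (- Ci) m * dpoly (p_coef gamma m) m f t))%C;
    [rewrite Ci_sqr | ]; ring.
Qed.

Lemma three_term_Kop (f : R -> C) : smoothRC f -> three_term_deriv (fun n => Kop gamma n f).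
Proof.
intros Hf n.
refine (is_cderive_ext _ _ _ _ (fun _ => eq_refl) _
          (is_cderive_scal (cpow (- Ci) n) _ _ (is_cderive_dpoly (p_coef gamma n) n f Hf))).
intro t; rewrite gamma_Kop_S, Kop_prev_term; simpl cpow; ring.
Qed.

Lemma three_term_conj (X : nat -> R -> C) :
  three_term_deriv X -> three_term_deriv (fun n t => Cconj (X n t)).
Proof.
intros HX n; refine (is_cderive_ext _ _ _ _ (fun _ => eq_refl) _ (is_cderive_conj _ _ (HX n))).
intro t; destruct n; apply injective_projections; simpl; ring.
Qed.

(* The recurrence determines [X (n+1)] from the derivative of [X n] and from [X (n-1)]. *)
Lemma three_term_unique (X Y : nat -> R -> C) :
  three_term_deriv X -> three_term_deriv Y -> (forall t, X O t = Y O t) ->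
  forall n t, X n t = Y n t.
Proof.
intros HX HY H0.
assert (step : forall n, (forall t, X n t = Y n t) ->
                 (forall t, prev_term X n t = prev_term Y n t) ->
                 forall t, X (S n) t = Y (S n) t).
{ intros n Hn Hprev t.
  assert (HXY := is_cderive_unique _ _ _ (HX n)
                   (is_cderive_ext _ _ _ _ (fun s => eq_sym (Hn s)) (fun _ => eq_refl) (HY n)) t).
  simpl in HXY; rewrite Hprev in HXY.
  assert (Hg : gamma n <> 0) by apply Rgt_not_eq, gamma_pos.
  apply injective_projections; apply (Rmult_eq_reg_l (gamma n)); trivial;
    [apply (f_equal Re) in HXY | apply (f_equal Im) in HXY]; simpl in HXY; lra. }
assert (pair : forall n, (forall t, X n t = Y n t) /\ (forall t, X (S n) t = Y (S n) t)).
{ induction n as [|n [Hn HSn]]; split; trivial.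
  - now apply step.
  - now apply step. }
intros n; apply pair.
Qed.

Lemma Kop_conj (g : R -> C) : smoothRC g ->
  forall n t, Kop gamma n (fun s => Cconj (g s)) t = Cconj (Kop gamma n g t).
Proof.
intro Hg; apply three_term_unique.
- exact (three_term_Kop _ (smoothRC_conj g Hg)).
- exact (three_term_conj _ (three_term_Kop g Hg)).
- intro t; now rewrite !Kop0.
Qed.

(* By the recurrence, all terms of the derivative but the last cancel in pairs. *)
Lemma is_cderive_csum_prod (X Y : nat -> R -> C) (n : nat) :
  three_term_deriv X -> three_term_deriv Y ->
  is_cderive (fun t => csum (fun k => X k t * Y k t)%C n)
             (fun t => gamma n * (X (S n) t * Y n t + X n t * Y (S n) t))%C.
Proof.
intros HX HY; induction n as [|n IH].
- refine (is_cderive_ext _ _ _ _ (fun _ => eq_refl) _ (is_cderive_mult _ _ _ _ (HX O) (HY O))).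
  intro t; simpl; ring.
- refine (is_cderive_ext _ _ _ _ (fun _ => eq_refl) _
            (is_cderive_plus _ _ _ _ IH (is_cderive_mult _ _ _ _ (HX (S n)) (HY (S n))))).
  intro t; simpl; ring.
Qed.

End ThreeTermDerivative.

Lemma Cmod_cross_le (g : R) (x0 x1 y0 y1 : C) : 0 <= g ->
  Cmod (g * (x1 * y0 + x0 * y1))%C <=
  (g * (Cmod x0 ^ 2 + Cmod x1 ^ 2) + g * (Cmod y0 ^ 2 + Cmod y1 ^ 2)) / 2.
Proof.
intro Hg; rewrite Cmod_mult, Cmod_R, Rabs_pos_eq by exact Hg.
assert (Htri := Cmod_triangle (x1 * y0) (x0 * y1)); rewrite !Cmod_mult in Htri.
assert (amgm : forall u v, u * v <= (u ^ 2 + v ^ 2) / 2)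
  by (intros u v; assert (H := pow2_ge_0 (u - v)); nra).
assert (H1 := amgm (Cmod x1) (Cmod y0)); assert (H2 := amgm (Cmod x0) (Cmod y1)).
nra.
Qed.

Lemma continuity_pt_Cmod2 (F F' : R -> C) (t : R) :
  is_cderive F F' -> continuity_pt (fun s => Cmod (F s) ^ 2) t.
Proof.
intro HF.
assert (cont : forall u u', (forall s, is_derive u s (u' s)) -> continuity_pt u t)
  by (intros u u' Hu; apply derivable_continuous_pt; exists (u' t); apply is_derive_Reals, Hu).
apply (continuity_pt_ext (fun s => Re (F s) * Re (F s) + Im (F s) * Im (F s)));
  [intro s; rewrite Cmod2_alt; ring|].
assert (HRe : continuity_pt (fun s => Re (F s)) t)
  by (apply (cont _ (fun s => Re (F' s))); intro s; apply (HF s)).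
assert (HIm : continuity_pt (fun s => Im (F s)) t)
  by (apply (cont _ (fun s => Im (F' s))); intro s; apply (HF s)).
apply continuity_pt_plus; now apply continuity_pt_mult.
Qed.

Lemma unif_conv_compact_bounded (u : nat -> R -> R) (a b : R) : a <= b ->
  (forall n t, a <= t <= b -> continuity_pt (u n) t) -> unif_conv_compact u ->
  exists N M, forall n t, (N <= n)%nat -> a <= t <= b -> u n t <= M.
Proof.
intros Hab Hcont Hu.
destruct (Hu a b Hab) as [L HL]; destruct (HL 1 Rlt_0_1) as [N HN].
destruct (continuity_ab_maj (u N) a b Hab (Hcont N)) as [tmax [Hmax _]].
exists N, (u N tmax + 2); intros n t Hn Ht.
assert (Hn' := HN n Hn t Ht); assert (HN' := HN N (le_n N) t Ht); assert (Hm := Hmax t Ht).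
apply Rabs_def2 in Hn'; apply Rabs_def2 in HN'; lra.
Qed.

(* Mean value inequality, via the real function [s |-> Re (conj z * F s)] with [z = F y - F x]. *)
Lemma Cmod_increment_le (F F' : R -> C) (x y B : R) : is_cderive F F' ->
  (forall s, Rmin x y <= s <= Rmax x y -> Cmod (F' s) <= B) ->
  Cmod (F y - F x)%C <= B * Rabs (y - x).
Proof.
intros HF HB.
set (z := (F y - F x)%C).
destruct (MVT_abs (fun s => Re (Cconj z * F s)%C) (fun s => Re (Cconj z * F' s)%C) x y)
  as [c [Hc Hcxy]].
{ intros c _; apply is_derive_Reals, (is_cderive_scal (Cconj z) _ _ HF c). }
assert (Hz2 : Re (Cconj z * F y)%C - Re (Cconj z * F x)%C = Cmod z ^ 2).
{ rewrite Cmod2_alt; unfold z; simpl; ring. }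
assert (Hd : Rabs (Re (Cconj z * F' c)%C) <= Cmod z * B).
{ eapply Rle_trans; [apply re_le_Cmod|].
  rewrite Cmod_mult, Cmod_conj; apply Rmult_le_compat_l; [apply Cmod_ge_0 | now apply HB]. }
rewrite Hz2, Rabs_pos_eq in Hc by apply pow2_ge_0.
assert (HB0 : 0 <= B) by (eapply Rle_trans; [apply Cmod_ge_0 | apply (HB x)];
                           split; [apply Rmin_l | apply Rmax_l]).
assert (Hzy := Cmod_ge_0 z); assert (Hyx := Rabs_pos (y - x)).
destruct (Req_dec (Cmod z) 0) as [Hz0|Hz0]; [rewrite Hz0; nra|].
apply (Rmult_le_reg_l (Cmod z)); [lra|]; nra.
Qed.

Lemma filterlim_Cdiv_perturb (a b : nat -> C) (H : nat -> R) (l : C) (M : R) :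
  is_lim_seq H p_infty -> eventually (fun n => Cmod (b n - a n)%C <= M) ->
  filterlim (fun n => a n / H n)%C eventually (locally l) ->
  filterlim (fun n => b n / H n)%C eventually (locally l).
Proof.
intros HH Hba Ha; apply filterlim_locally; intro eps.
assert (Hlarge : eventually (fun n => 2 * (Rabs M + 1) / eps < H n))
  by exact (proj2 (is_lim_seq_spec H p_infty) HH (2 * (Rabs M + 1) / eps)).
assert (Hpos : 0 < 2 * (Rabs M + 1) / eps)
  by (apply Rdiv_lt_0_compat; [assert (Hm := Rabs_pos M) | apply cond_pos]; lra).
generalize (filter_and _ _ (filter_and _ _ Hba Hlarge)
              (proj1 (filterlim_locally _ l) Ha (pos_div_2 eps))).
apply filter_imp; intros n [[Hn Hbig] Hball].
replace (pos eps) with (pos (pos_div_2 eps) + pos (pos_div_2 eps)) by (simpl; lra).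
apply (ball_triangle _ _ _ _ _ Hball), (@norm_compat1 C_AbsRing C_NormedModule).
change (Cmod (b n / H n - a n / H n)%C < eps / 2).
assert (HHn : H n <> 0) by lra.
replace (b n / H n - a n / H n)%C with ((b n - a n) / H n)%C
  by (field; intro E; apply HHn, (f_equal Re E)).
rewrite Cmod_div, Cmod_R, Rabs_pos_eq by (lra || (intro E; apply HHn, (f_equal Re E))).
apply (Rmult_lt_reg_r (H n)); [lra|].
unfold Rdiv; rewrite Rmult_assoc, Rinv_l, Rmult_1_r by exact HHn.
assert (Heps := cond_pos eps); assert (Hm := Rle_abs M).
apply (Rmult_lt_compat_l eps) in Hbig; [|exact Heps].
replace (eps * (2 * (Rabs M + 1) / eps)) with (2 * (Rabs M + 1)) in Hbig by (field; lra).
nra.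
Qed.

Section KEnergy.

Variable gamma : nat -> R.
Hypothesis gamma_pos : forall n, 0 < gamma n.

Definition Kenergy (f : R -> C) (n : nat) (t : R) : R :=
  gamma n * (Cmod (Kop gamma n f t) ^ 2 + Cmod (Kop gamma (S n) f t) ^ 2).

Lemma continuity_Kenergy (f : R -> C) (n : nat) (t : R) :
  smoothRC f -> continuity_pt (Kenergy f n) t.
Proof.
intro Hf; apply continuity_pt_mult; [now apply continuity_pt_const|].
apply continuity_pt_plus; eapply continuity_pt_Cmod2; apply (three_term_Kop gamma gamma_pos f Hf).
Qed.

Lemma Kenergy_conj (g : R -> C) (n : nat) (t : R) :
  smoothRC g -> Kenergy (fun s => Cconj (g s)) n t = Kenergy g n t.
Proof. intro Hg; unfold Kenergy; now rewrite !(Kop_conj gamma gamma_pos g Hg), !Cmod_conj. Qed.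

Lemma Cmod_deriv_csum_Kop_le (f h : R -> C) (n : nat) (t : R) :
  Cmod (gamma n * (Kop gamma (S n) f t * Kop gamma n h t
                   + Kop gamma n f t * Kop gamma (S n) h t))%C
  <= (Kenergy f n t + Kenergy h n t) / 2.
Proof. exact (Cmod_cross_le _ _ _ _ _ (Rlt_le _ _ (gamma_pos n))). Qed.

End KEnergy.

Theorem lemma31 (gamma : nat -> R) (f g : R -> C)
  (Hpos : forall n : nat, 0 < gamma n)
  (HC1 : CondC1 gamma) (HC2 : CondC2 gamma) (HC3 : CondC3 gamma) (HC4 : CondC4 gamma)
  (HC5 : CondC5 gamma) (HC6 : CondC6 gamma) (HC7 : CondC7 gamma)
  (Hf : in_L gamma f) (Hg : in_L gamma g) :
  (exists (t0 : R) (l : C),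
      filterlim (fun n => sigma_fg gamma f g n t0) eventually (locally l)) ->
  exists c : C, forall t : R,
      filterlim (fun n => sigma_fg gamma f g n t) eventually (locally c).
Proof.
intros [t0 [l Hl]]; exists l; intro t.
destruct Hf as [Sf Uf], Hg as [Sg Ug].
set (h := fun s => Cconj (g s)).
pose proof (smoothRC_conj g Sg) as Sh.
assert (Hab := Rmin_Rmax t0 t).
destruct (unif_conv_compact_bounded _ _ _ Hab
            (fun n s _ => continuity_Kenergy gamma Hpos f n s Sf) Uf) as [Nf [Mf HMf]].
destruct (unif_conv_compact_bounded _ _ _ Hab
            (fun n s _ => continuity_Kenergy gamma Hpos g n s Sg) Ug) as [Ng [Mg HMg]].
apply (filterlim_Cdiv_perturb
         (fun n => csum (fun k => Kop gamma k f t0 * Kop gamma k h t0)%C n) _ _ l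
         ((Mf + Mg) / 2 * Rabs (t - t0)) HC4); [|exact Hl].
exists (max Nf Ng); intros n Hn.
apply (Cmod_increment_le _ _ _ _ _
         (is_cderive_csum_prod gamma _ _ n (three_term_Kop gamma Hpos f Sf)
                                           (three_term_Kop gamma Hpos h Sh))).
intros s Hs; eapply Rle_trans; [apply Cmod_deriv_csum_Kop_le; exact Hpos|].
unfold h; rewrite Kenergy_conj by assumption.
assert (HfN := HMf n s ltac:(lia) Hs); assert (HgN := HMg n s ltac:(lia) Hs); lra.
Qed.
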